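(* For every MSSP instance there exists an optimal autonomous profile, i.e. $\pi^*\in\Pi$ with $\mathbb{E}_{\pi^*}[\textit{MHit}]=\inf_{\pi\in\Pi}\mathbb{E}_\pi[\textit{MHit}]$, and for every $n\ge1$ there exists a $\Pi_n$-optimal profile, i.e. $\pi^*\in\Pi_n$ with $\mathbb{E}_{\pi^*}[\textit{MHit}]=\inf_{\pi\in\Pi_n}\mathbb{E}_\pi[\textit{MHit}]$.
   Context: An MDP is a triple $M=(S,\textit{Act},P)$ with finite sets $S$, $\textit{Act}$ and $P:S\times\textit{Act}\times S\to[0,1]$ such that for each $s$ the set $\textit{En}(s)$ of enabled actions (those $a$ with $\sum_t P(s,a,t)=1$) is nonempty. An MSSP instance consists of an MDP $M$, a number $k\ge1$ of agents, and for each agent $i$ an initial state $\iota_i\in S$ and target set $T_i\subseteq S$ with $\iota_i\notin T_i\neq\emptyset$. In the autonomous setting each agent $i$ uses its own strategy $\sigma_i$ in $M$ which depends only on agent $i$'s own history (not on the other agents); the strategy is given by a set $\mathit{Mem}_i$ of memory states, a (randomized) initial memory, a randomized rule choosing an enabled action from the current state and memory state, and a randomized rule updating the memory state; agents evolve independently, agent $i$ starting in $\iota_i$. A tuple $\pi=(\sigma_1,\dots,\sigma_k)$ is an (autonomous) profile; $\Pi$ is the class of all autonomous profiles and, for $n\ge1$, $\Pi_n$ is the class of profiles in which every $\mathit{Mem}_i$ has at most $n$ elements ($\Pi_1$ = memoryless profiles). $\textit{MHit}$ is the first time step at which some agent $i$ is in a state of $T_i$ ($\infty$ if never), and $\mathbb{E}_\pi[\textit{MHit}]$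 is its expectation under $\pi$. *)

From HB Require Import structures.
From mathcomp Require Import all_boot all_order all_algebra.
From mathcomp Require Import all_classical all_reals all_analysis.
Set Implicit Arguments. Unset Strict Implicit. Unset Printing Implicit Defensive.
Import Order.TTheory GRing.Theory Num.Theory.
Local Open Scope ring_scope.
Local Open Scope classical_set_scope.

Section MSSP.
Variables (R : realType) (S Act : finType).

Definition enabled (P : S -> Act -> S -> R) (s : S) (a : Act) : Prop :=
  \sum_(t : S) P s a t = 1.

Definition is_MDP (P : S -> Act -> S -> R) : Prop :=
  (forall s a t, 0 <= P s a t <= 1) /\ (forall s, exists a, enabled P s a).

(* A (randomized, memory-based) strategy with memory set Mem:
   - init m        : probability that the initial memory state is m
   - act s m a     : probability of choosing action a in state s with memory m
   - upd m s a s' m' : probability that the memory becomes m' after a step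
                       from s with memory m, action a, to successor state s'. *)
Record strategy (Mem : choiceType) := Strategy {
  st_init : Mem -> R;
  st_act : S -> Mem -> Act -> R;
  st_upd : Mem -> S -> Act -> S -> Mem -> R }.

Definition is_distr (T : choiceType) (d : T -> R) : Prop :=
  (forall x, 0 <= d x) /\ (\esum_(x in [set: T]) (d x)%:E = 1%E).

Definition valid_strategy (P : S -> Act -> S -> R) (Mem : choiceType)
    (sg : strategy Mem) : Prop :=
  is_distr (st_init sg) /\
  (forall s m, (forall a, 0 <= st_act sg s m a) /\ \sum_(a : Act) st_act sg s m a = 1
               /\ (forall a, 0 < st_act sg s m a -> enabled P s a)) /\
  (forall m s a s', is_distr (st_upd sg m s a s')).

(* reach P sg iota T t s m = probability that at time t the agent (started in
   iota, using sg) is in state s with memory m and has not visited T at any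
   time step < t. *)
Fixpoint reach (P : S -> Act -> S -> R) (Mem : choiceType) (sg : strategy Mem)
    (iota : S) (T : {set S}) (t : nat) : S -> Mem -> \bar R :=
  match t with
  | 0 => fun s m => if s == iota then (st_init sg m)%:E else 0%E
  | t'.+1 => fun s' m' =>
      (\sum_(s : S | s \notin T) \sum_(a : Act)
         \esum_(m in [set: Mem])
           (reach P sg iota T t' s m *
            (st_act sg s m a * P s a s' * st_upd sg m s a s' m')%:E))%E
  end.

(* Probability that the agent has not visited T at any time <= t,
   i.e. P(Hit > t). *)
Definition survive (P : S -> Act -> S -> R) (Mem : choiceType) (sg : strategy Mem)
    (iota : S) (T : {set S}) (t : nat) : \bar R :=
  (\sum_(s : S | s \notin T) \esum_(m in [set: Mem]) reach P sg iota T t s m)%E.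

(* Expected value of MHit = min_i Hit_i for independently evolving agents:
   E[MHit] = sum_{t>=0} P(MHit > t) = sum_{t>=0} prod_i P(Hit_i > t). *)
Definition EMHit (P : S -> Act -> S -> R) (k : nat) (iota : 'I_k -> S)
    (T : 'I_k -> {set S}) (Mem : 'I_k -> choiceType)
    (pi : forall i, strategy (Mem i)) : \bar R :=
  (\sum_(t <oo) \prod_(i < k) survive P (pi i) (iota i) (T i) t)%E.

Definition values_Pi (P : S -> Act -> S -> R) (k : nat) (iota : 'I_k -> S)
    (T : 'I_k -> {set S}) : set (\bar R) :=
  [set x | exists (Mem : 'I_k -> choiceType) (pi : forall i, strategy (Mem i)),
     (forall i, valid_strategy P (pi i)) /\ x = EMHit P iota T pi].

Definition values_Pin (P : S -> Act -> S -> R) (k : nat) (iota : 'I_k -> S)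
    (T : 'I_k -> {set S}) (n : nat) : set (\bar R) :=
  [set x | exists (Mem : 'I_k -> finType) (pi : forall i, strategy (Mem i)),
     (forall i, #|Mem i| <= n)%N /\
     (forall i, valid_strategy P (pi i)) /\ x = EMHit P iota T pi].

End MSSP.

(* The expected hitting time E[MHit] = sum_t prod_i P(Hit_i > t) is minimised over a compact
   parameter space on which it is lower semicontinuous. For Pi_n, a profile whose memory sets
   have at most n elements can be relabelled to use the memory 'I_n, so profiles become points
   of a product of unit intervals and the valid ones form a closed set. For Pi, a strategy is
   replaced by its occupation measure, the probability of every finite history followed by
   every action; these measures are cut out by closed linear constraints in a product of unit
   intervals, and each of them is realised by a strategy that remembers the whole history. In
   both cases every P(Hit_i > t) is a polynomial in the parameters, so E[MHit] is a series of
   nonnegative continuous functions, hence lower semicontinuous, and it attains its infimum on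
   the nonempty parameter space, which is compact by Tychonoff's theorem. *)

From HB Require Import structures.
From mathcomp Require Import all_boot all_order all_algebra.
From mathcomp Require Import all_classical all_reals all_analysis.
Set Implicit Arguments. Unset Strict Implicit. Unset Printing Implicit Defensive.
Import Order.TTheory GRing.Theory Num.Theory.
Import numFieldNormedType.Exports.
Local Open Scope ring_scope.
Local Open Scope classical_set_scope.

(** * Continuity, closed sets and attained infima *)

Section continuous_big.
Context {R : realType} {X : topologicalType}.

Lemma continuous_sum (J : Type) (r : seq J) (Pj : pred J) (F : J -> X -> R) :
  (forall j, continuous (F j)) -> continuous (fun x => \sum_(j <- r | Pj j) F j x).
Proof.
by move=> cF; apply: (@continuous_big R^o) => [|j _]; [exact: add_continuous|exact: cF].
Qed.

Lemma continuous_prod (J : Type) (r : seq J) (Pj : pred J) (F : J -> X -> R) :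
  (forall j, continuous (F j)) -> continuous (fun x => \prod_(j <- r | Pj j) F j x).
Proof.
move=> cF; apply: (@continuous_big R^o) => [|j _]; last exact: cF.
exact: (@scale_continuous R R^o).
Qed.

Lemma continuous_mul (f g : X -> R) :
  continuous f -> continuous g -> continuous (fun x => f x * g x).
Proof. by move=> cf cg x; exact: (@continuousM R X f g x (cf x) (cg x)). Qed.

End continuous_big.

Section closed_sets.
Context {X : topologicalType}.

Lemma closed_forall (J : Type) (Q : J -> set X) :
  (forall j, closed (Q j)) -> closed [set x | forall j, Q j x].
Proof.
move=> cQ; have -> : [set x | forall j, Q j x] = \bigcap_(j in [set: J]) Q j.
  by apply/seteqP; split => x /= Qx j //; exact: Qx.
exact: closed_bigI.
Qed.

Lemma closed_implies (A : Prop) (Q : set X) : closed Q -> closed [set x | A -> Q x].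
Proof.
have [a cQ|nA _] := pselect A.
  suff -> : [set x | A -> Q x] = Q by [].
  by apply/seteqP; split => x /= Qx //; exact: Qx.
suff -> : [set x | A -> Q x] = setT by exact: closedT.
by apply/seteqP; split => // x _ /nA.
Qed.

Context {R : realType}.

Lemma closed_eq_fun (f g : X -> R) :
  continuous f -> continuous g -> closed [set x | f x = g x].
Proof.
move=> cf cg; have -> : [set x | f x = g x] = (fun x => f x - g x) @^-1` [set y | y = 0].
  by apply/seteqP; split=> x /= => [->|/eqP]; [rewrite subrr|rewrite subr_eq0 => /eqP].
apply: (continuous_closedP _).1 _ _ (@closed_eq _ 0) => x.
exact: (@continuousB _ R^o _ _ _ x (cf x) (cg x)).
Qed.

Lemma closed_le_fun (f g : X -> R) :
  continuous f -> continuous g -> closed [set x | f x <= g x].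
Proof.
move=> cf cg; have -> : [set x | f x <= g x] = (fun x => g x - f x) @^-1` [set y | 0 <= y].
  by apply/seteqP; split=> x /=; rewrite subr_ge0.
apply: (continuous_closedP _).1 _ _ (@closed_ge _ 0) => x.
exact: (@continuousB _ R^o _ _ _ x (cg x) (cf x)).
Qed.

End closed_sets.

Lemma compact_unit_box {R : realType} (I : eqType) (K : set {ptws I -> R}) :
  closed K -> (forall x, K x -> forall i, 0 <= x i <= 1) -> compact K.
Proof.
move=> cK K01; apply: (subclosed_compact (A := K)
  (B := [set x : {ptws I -> R} | forall i, `[(0:R), 1]%classic (x i)]) cK).
  exact: (@tychonoff I (fun _ => R) _ (fun _ => @segment_compact R 0 1)).
by move=> x Kx i; rewrite /= in_itv /=; exact: K01.
Qed.

Section attains_inf.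
Context {R : realType} {X : topologicalType}.
Local Open Scope ereal_scope.

Lemma lte_dense_fin (x y : \bar R) : x < y -> exists2 r : R, x < r%:E & r%:E < y.
Proof.
case: x => [x||]; case: y => [y||] //= xy.
- by exists ((x + y) / 2)%R; rewrite lte_fin ?midf_lt // -lte_fin.
- by exists (x + 1)%R; rewrite ?ltry // lte_fin ltrDl.
- by exists (y - 1)%R; rewrite ?ltNyr // lte_fin ltrBlDr ltrDl.
- by exists 0%R; rewrite ?ltry ?ltNyr.
Qed.

Lemma compact_ereal_inf_attained (K : set X) (f : X -> \bar R) :
  compact K -> K !=set0 -> (forall r : R, closed (K `&` [set x | f x <= r%:E])) ->
  exists2 x, K x & f x = ereal_inf (f @` K).
Proof.
move=> cK [x0 Kx0] cf; set c := ereal_inf (f @` K).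
have c_le z : K z -> c <= f z by move=> Kz; apply: ereal_inf_lbound; exists z.
have [cy|cNy] := eqVneq c +oo.
  by exists x0 => //; rewrite cy; apply/eqP; rewrite eq_le leey /= -cy c_le.
pose B (r : R) := K `&` [set x | f x <= r%:E].
have Bne r : c < r%:E -> B r !=set0.
  move=> cr; have [_ [z Kz <-] fzr] := ereal_inf_lt cr.
  by exists z; split => //; exact: ltW.
have /lte_dense_fin [r0 cr0 _] : c < +oo by rewrite ltey.
(* The sets [B r] with [c < r] form a proper filter base containing [K]; its cluster point
   in [K] lies in every closed [B r]. *)
have FF : ProperFilter (filter_from [set r | c < r%:E] B).
  apply: filter_from_proper; last exact: Bne.
  apply: filter_from_filter; first by exists r0.
  move=> r1 r2 cr1 cr2; exists (Num.min r1 r2); first by rewrite /= EFin_min lt_min cr1.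
  move=> x [Kx fx]; split; split => //; apply: le_trans fx _;
    by rewrite lee_fin ge_min lexx ?orbT.
have FK : filter_from [set r | c < r%:E] B K by exists r0 => // x [].
have [p [Kp clp]] := cK _ FF FK.
exists p => //; apply/eqP; rewrite eq_le c_le // andbT.
rewrite leNgt; apply/negP => /lte_dense_fin [r cr rfp].
move: clp; rewrite clusterE => /(_ (B r)) Bp.
have /(closure_id _).1 clB := cf r.
have : B r p by rewrite /B clB; apply: Bp; exists r.
by case=> _ /=; rewrite leNgt rfp.
Qed.

Lemma nneseries_le_partialP (u : nat -> \bar R) (x : \bar R) :
  (forall t, 0 <= u t) ->
  \sum_(t <oo) u t <= x <-> forall N, \sum_(t < N) u t <= x.
Proof.
move=> u0; split=> [ux N|ux].
  by apply: le_trans ux; rewrite -(big_mkord xpredT); exact: nneseries_lim_ge.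
have /ereal_nondecreasing_cvgn/cvg_lim -> :=
  @ereal_nondecreasing_series R u xpredT 0%N (fun t _ _ => u0 t) => //.
by apply: ge_ereal_sup => _ [N _ <-]; rewrite big_mkord.
Qed.

Lemma closed_setI_nneseries_le (K : set X) (g : nat -> X -> R) (r : R) :
  closed K -> (forall t, continuous (g t)) -> (forall t x, K x -> (0 <= g t x)%R) ->
  closed (K `&` [set x | \sum_(t <oo) (g t x)%:E <= r%:E]).
Proof.
move=> cK cg g0.
have -> : K `&` [set x | \sum_(t <oo) (g t x)%:E <= r%:E] =
    K `&` \bigcap_(N in [set: nat]) [set x | (\sum_(t < N) g t x <= r)%R].
  apply/seteqP; split=> x [Kx Vx]; split=> //;
    have gx0 t : 0 <= (g t x)%:E by rewrite lee_fin g0.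
    by move=> N _ /=; rewrite -lee_fin -sumEFin; exact: (nneseries_le_partialP _ gx0).1.
  by apply/(nneseries_le_partialP _ gx0) => N; rewrite sumEFin lee_fin; exact: Vx.
apply: closedI => //; apply: closed_bigI => N _.
by apply: closed_le_fun; [exact: continuous_sum|exact: cst_continuous].
Qed.

Lemma compact_nneseries_inf_attained (K : set X) (g : nat -> X -> R) :
  compact K -> closed K -> K !=set0 ->
  (forall t, continuous (g t)) -> (forall t x, K x -> (0 <= g t x)%R) ->
  exists2 x, K x &
    \sum_(t <oo) (g t x)%:E = ereal_inf [set \sum_(t <oo) (g t y)%:E | y in K].
Proof.
move=> Kcompact Kclosed Kne cg g0; apply: compact_ereal_inf_attained => // r.
exact: closed_setI_nneseries_le.
Qed.

End attains_inf.

(** * Strategies with finite memory *)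

Section probability_vectors.
Context {R : realType}.

Definition prob_vec (J : finType) (d : J -> R) := (forall j, 0 <= d j) /\ \sum_j d j = 1.

Lemma prob_vec_le1 (J : finType) (d : J -> R) j : prob_vec d -> 0 <= d j <= 1.
Proof.
case=> d0 d1; rewrite d0 /= -d1 (bigD1 j) //= lerDl.
exact: sumr_ge0.
Qed.

Lemma esum_fin (J : finType) (f : J -> \bar R) : (forall j, (0 <= f j)%E) ->
  \esum_(j in [set: J]) f j = (\sum_j f j)%E.
Proof.
move=> f0; rewrite esum_fset ?(fsbigE (enum J)) ?enum_uniq //.
- by rewrite big_enum_cond /=; apply: eq_bigl => j; rewrite in_setT.
- by move=> j _; rewrite mem_enum.
- exact: finite_finset.
Qed.

Lemma is_distr_finP (J : finType) (d : J -> R) : is_distr d <-> prob_vec d.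
Proof.
have d0E : (forall j, 0 <= d j) -> forall j, (0 <= (d j)%:E)%E by move=> d0 j; rewrite lee_fin.
split=> -[d0 d1]; split=> //.
  by move: d1; rewrite esum_fin ?sumEFin => [[]|]; [|exact: d0E].
by rewrite esum_fin ?sumEFin ?d1 //; exact: d0E.
Qed.

Lemma closed_prob_vec (X : topologicalType) (J : finType) (F : X -> J -> R) :
  (forall j, continuous (F^~ j)) -> closed [set x | prob_vec (F x)].
Proof.
move=> cF; apply: closedI.
  by apply: closed_forall => j; apply: closed_le_fun => //; exact: cst_continuous.
by apply: closed_eq_fun; [exact: continuous_sum|exact: cst_continuous].
Qed.

End probability_vectors.

Section finite_memory.
Variables (R : realType) (S Act : finType) (P : S -> Act -> S -> R).
Hypothesis P_ge0 : forall s a t, 0 <= P s a t.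
Variables (iota : S) (T : {set S}).

Lemma valid_strategy_ge0 (M : choiceType) (sg : strategy R S Act M) :
  valid_strategy P sg ->
  [/\ forall m, 0 <= st_init sg m, forall s m a, 0 <= st_act sg s m a &
      forall m s a s' m', 0 <= st_upd sg m s a s' m'].
Proof.
case=> [[i0 _] [ha hu]]; split => //.
- by move=> s m a; case: (ha s m) => + _; apply.
- by move=> m s a s' m'; case: (hu m s a s') => + _; apply.
Qed.

Lemma valid_strategy_finP (M : finType) (sg : strategy R S Act M) :
  valid_strategy P sg <->
  prob_vec (st_init sg) /\
  (forall s m, prob_vec (st_act sg s m) /\ (forall a, ~ enabled P s a -> st_act sg s m a = 0)) /\
  (forall m s a s', prob_vec (st_upd sg m s a s')).
Proof.
split.
- case=> [/is_distr_finP hi [ha hu]]; split => //; split=> [s m|m s a s']; last exact/is_distr_finP.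
  have [a0 [a1 a2]] := ha s m; split => // a na.
  apply/eqP; rewrite eq_le a0 andbT leNgt; apply/negP => /a2; exact: na.
- case=> hi [ha hu]; split; first exact/is_distr_finP.
  split=> [s m|m s a s']; last exact/is_distr_finP.
  have [[a0 a1] a2] := ha s m; do 2 split => //.
  move=> a pa; have [//|na] := pselect (enabled P s a).
  by move: pa; rewrite a2 // ltxx.
Qed.

Lemma reach_ge0 (M : choiceType) (sg : strategy R S Act M) t s m :
  valid_strategy P sg -> (0 <= reach P sg iota T t s m)%E.
Proof.
move=> /valid_strategy_ge0[hi ha hu]; elim: t s m => [|t IH] s m /=.
  by case: ifP; rewrite ?lee_fin.
do 2 (apply: sume_ge0 => ? _); apply: esum_ge0 => ? _.
by apply: mule_ge0; rewrite ?lee_fin ?mulr_ge0.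
Qed.

Fixpoint reachR (M : finType) (sg : strategy R S Act M) (t : nat) : S -> M -> R :=
  match t with
  | 0 => fun s m => if s == iota then st_init sg m else 0
  | t'.+1 => fun s' m' =>
      \sum_(s : S | s \notin T) \sum_(a : Act) \sum_(m : M)
         reachR sg t' s m * (st_act sg s m a * P s a s' * st_upd sg m s a s' m')
  end.

Definition surviveR (M : finType) (sg : strategy R S Act M) t : R :=
  \sum_(s : S | s \notin T) \sum_(m : M) reachR sg t s m.

Section valid.
Variables (M : finType) (sg : strategy R S Act M).
Hypothesis sg_valid : valid_strategy P sg.

Lemma reachR_ge0 t s m : 0 <= reachR sg t s m.
Proof.
have [hi ha hu] := valid_strategy_ge0 sg_valid.
elim: t s m => [|t IH] s m /=; first by case: ifP.
do 3 (apply: sumr_ge0 => ? _); by rewrite !mulr_ge0.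
Qed.

Lemma reachEFin t s m : reach P sg iota T t s m = (reachR sg t s m)%:E.
Proof.
have [hi ha hu] := valid_strategy_ge0 sg_valid.
elim: t s m => [|t IH] s m /=; first by case: ifP.
rewrite -sumEFin; apply: eq_bigr => s0 _; rewrite -sumEFin; apply: eq_bigr => a _.
rewrite esum_fin -?sumEFin; first by apply: eq_bigr => m0 _; rewrite IH.
by move=> m0; rewrite IH -EFinM lee_fin mulr_ge0 ?reachR_ge0 ?mulr_ge0.
Qed.

Lemma surviveEFin t : survive P sg iota T t = (surviveR sg t)%:E.
Proof.
rewrite /survive /surviveR -sumEFin; apply: eq_bigr => s _.
rewrite esum_fin -?sumEFin; first by apply: eq_bigr => m _; rewrite reachEFin.
by move=> m; rewrite reachEFin // lee_fin reachR_ge0.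
Qed.

End valid.
End finite_memory.

Section default_strategy.
Variables (R : realType) (S Act : finType) (P : S -> Act -> S -> R).
Hypothesis P_enabled : forall s, exists a, enabled P s a.

Let exists_enabled s : exists a, \sum_t P s a t == 1.
Proof. by have [a /eqP] := P_enabled s; exists a. Qed.

Definition default_act (s : S) : Act := xchoose (exists_enabled s).

Definition dirac_act (s : S) (a : Act) : R := if a == default_act s then 1 else 0.

Lemma dirac_act_valid s : (forall a, 0 <= dirac_act s a) /\
  \sum_a dirac_act s a = 1 /\ (forall a, 0 < dirac_act s a -> enabled P s a).
Proof.
split=> [a|]; first by rewrite /dirac_act; case: ifP.
split=> [|a]; first by rewrite /dirac_act -big_mkcond /= big_pred1_eq.
rewrite /dirac_act; case: eqP => [-> _|]; last by rewrite ltxx.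
exact/eqP/(xchooseP (exists_enabled s)).
Qed.

Definition default_strategy : strategy R S Act unit :=
  Strategy (fun _ => 1) (fun s _ => dirac_act s) (fun _ _ _ _ _ => 1).

Lemma valid_default_strategy : valid_strategy P default_strategy.
Proof.
have unit_prob : prob_vec (fun _ : unit => 1 : R).
  by split=> [_|]; rewrite ?ler01 // (big_pred1 tt) // => -[].
split; first exact/is_distr_finP.
by split=> [s m|m s a s']; [exact: dirac_act_valid|exact/is_distr_finP].
Qed.

End default_strategy.

Section push_strategy.
Variables (R : realType) (S Act : finType) (P : S -> Act -> S -> R).
Hypothesis P_enabled : forall s, exists a, enabled P s a.
Variables (iota : S) (T : {set S}).
Variables (M M' : finType) (f : M -> M').
Hypothesis f_inj : injective f.

Definition unpush (m' : M') : option M := [pick m | f m == m'].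

Lemma unpushP m' m : unpush m' = Some m <-> f m = m'.
Proof.
rewrite /unpush; case: pickP => [m0 /eqP fm0|none].
  by split=> [[<-]|fm] //; congr Some; apply: f_inj; rewrite fm0.
by split=> // fm; have := none m; rewrite fm eqxx.
Qed.

Lemma sum_unpush (F : M -> R) : \sum_(m' : M') oapp F 0 (unpush m') = \sum_m F m.
Proof.
transitivity (\sum_(m' : M') \sum_(m : M | f m == m') F m).
  apply: eq_bigr => m' _; case E: (unpush m') => [m|] /=.
    rewrite (big_pred1 m) // => m0; apply/eqP/eqP => [fm0|->]; last exact/unpushP.
    by apply: f_inj; rewrite fm0; apply/esym/unpushP.
  rewrite big_pred0 // => m0; apply/negP => /eqP /unpushP.
  by rewrite E.
rewrite (exchange_big_dep xpredT) //=.
by apply: eq_bigr => m _; rewrite (big_pred1 (f m)) // => m'; rewrite eq_sym.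
Qed.

Variable sg : strategy R S Act M.

(* Memory states outside the range of [f] are unreachable; the Dirac action and the self-loop
   there only keep the strategy valid. *)
Definition push_strategy : strategy R S Act M' := Strategy
  (fun m' => oapp (st_init sg) 0 (unpush m'))
  (fun s m' a => oapp (fun m => st_act sg s m a) (dirac_act P_enabled s a) (unpush m'))
  (fun m'0 s a s' m' => if unpush m'0 is Some m then oapp (st_upd sg m s a s') 0 (unpush m')
                        else if m' == m'0 then 1 else 0).

Lemma reachR_push t s m' :
  reachR P iota T push_strategy t s m' = oapp (reachR P iota T sg t s) 0 (unpush m').
Proof.
elim: t s m' => [|t IH] s' m' /=; first by case: (unpush m') => [m|] /=; case: ifP.
have step s a : \sum_(j : M') reachR P iota T push_strategy t s j *
     (st_act push_strategy s j a * P s a s' * st_upd push_strategy j s a s' m') =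
   \sum_(m : M) reachR P iota T sg t s m * (st_act sg s m a * P s a s' *
     oapp (st_upd sg m s a s') 0 (unpush m')).
  rewrite -sum_unpush; apply: eq_bigr => j _; rewrite IH /=.
  by case: (unpush j) => [m|] /=; rewrite ?mul0r.
under eq_bigr do under eq_bigr do rewrite step.
case: (unpush m') => [m'0|] //=.
rewrite big1 // => s _; rewrite big1 // => a _; rewrite big1 // => m _.
by rewrite /= !mulr0.
Qed.

Lemma surviveR_push t : surviveR P iota T push_strategy t = surviveR P iota T sg t.
Proof.
by apply: eq_bigr => s _; under eq_bigr do rewrite reachR_push; rewrite sum_unpush.
Qed.

Lemma valid_push_strategy : valid_strategy P sg -> valid_strategy P push_strategy.
Proof.
have push_prob (d : M -> R) : prob_vec d -> prob_vec (fun m' => oapp d 0 (unpush m')).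
  case=> d0 d1; split; last by rewrite sum_unpush.
  by move=> m'; case: (unpush m').
case=> [/is_distr_finP hi [ha hu]]; split; first exact/is_distr_finP/push_prob.
split=> [s m'|m'0 s a s'] /=.
  by case: (unpush m') => [m|] /=; [exact: ha|exact: dirac_act_valid].
apply/is_distr_finP; case: (unpush m'0) => [m|] /=; first exact/push_prob/is_distr_finP.
split=> [m'|]; first by case: ifP.
by rewrite -big_mkcond /= big_pred1_eq.
Qed.

End push_strategy.

(** * Occupation measures *)

Section tuple_sums.
Variable S : finType.

Lemma big_tuple_cons (V : Type) (idx : V) (op : Monoid.com_law idx) n
    (F : n.+1.-tuple S -> V) :
  \big[op/idx]_(w : n.+1.-tuple S) F w =
  \big[op/idx]_(s : S) \big[op/idx]_(w : n.-tuple S) F [tuple of s :: w].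
Proof.
rewrite pair_big /= (reindex (fun p : S * n.-tuple S => [tuple of p.1 :: p.2])) //=.
exists (fun w : n.+1.-tuple S => (thead w, [tuple of behead w])).
  by move=> [s w] _ /=; congr pair; apply: val_inj.
move=> w _; apply: val_inj => /=.
by case: w => -[|x r] //= _; rewrite /thead (tnth_nth x).
Qed.

Lemma big_tuple_head (V : Type) (idx : V) (op : Monoid.com_law idx) n x0 s
    (F : seq S -> V) :
  \big[op/idx]_(w : n.+1.-tuple S | head x0 w == s) F w =
  \big[op/idx]_(w : n.-tuple S) F (s :: w).
Proof.
rewrite big_mkcond big_tuple_cons (bigD1 s) //= eqxx.
rewrite [X in op _ X]big1 ?Monoid.mulm1 // => s' s's.
by rewrite big1 // => w _ /=; rewrite (negbTE s's).
Qed.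

Lemma big_tuple0 (V : Type) (idx : V) (op : Monoid.com_law idx) (F : 0.-tuple S -> V) :
  \big[op/idx]_(w : 0.-tuple S) F w = F [tuple].
Proof. by rewrite (big_pred1 [tuple]) // => w /=; apply/esym/eqP/val_inj; case: w => -[]. Qed.

Lemma big_notin_if_eq (V : Type) (idx : V) (op : Monoid.com_law idx) (T : {set S}) x
    (G : S -> V) :
  \big[op/idx]_(s : S | s \notin T) (if x == s then G s else idx) =
  if x \notin T then G x else idx.
Proof.
rewrite -big_mkcondr /=; case: (boolP (x \in T)) => xT /=.
  by rewrite big_pred0 // => s; apply/negP => /andP[sT /eqP xs]; move: sT; rewrite -xs xT.
rewrite (big_pred1 x) // => s /=; apply/andP/eqP; first by case=> _ /eqP.
by move=> ->; split.
Qed.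

Lemma exchange_big_head (V : Type) (idx : V) (op : Monoid.com_law idx) n x0
    (T : {set S}) (F : S -> seq S -> V) :
  \big[op/idx]_(s : S | s \notin T) \big[op/idx]_(w : n.-tuple S | head x0 w == s) F s w =
  \big[op/idx]_(w : n.-tuple S | head x0 w \notin T) F (head x0 w) w.
Proof.
rewrite (exchange_big_dep xpredT) //= [RHS]big_mkcond /=.
by apply: eq_bigr => w _; rewrite -(big_notin_if_eq op T _ (F^~ w)) big_mkcondr.
Qed.

End tuple_sums.

Section esum_lemmas.
Variable R : realType.
Local Open Scope ereal_scope.

Lemma esum_single (T : choiceType) (f : T -> \bar R) t0 :
  (forall t, t != t0 -> f t = 0) -> 0 <= f t0 ->
  \esum_(t in [set: T]) f t = f t0.
Proof.
move=> f0 ft0; rewrite -(esum_set1 ft0) [RHS]esum_mkcond; apply: eq_esum => t _.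
case: (eqVneq t t0) => [->|ne]; first by rewrite ifT // inE.
by rewrite ifF ?f0 //; apply/negbTE/negP; rewrite inE /=; exact/eqP.
Qed.

Lemma esumZl (T : choiceType) (D : set T) (r : R) (f : T -> \bar R) :
  (0 <= r)%R -> (forall t, 0 <= f t) ->
  \esum_(t in D) (r%:E * f t) = r%:E * \esum_(t in D) f t.
Proof.
move=> r0 f0; rewrite /esum -ereal_supZl //; last first.
  by apply/set0P; exists (\sum_(x \in set0) f x); exists set0 => //; exact: fsets_set0.
congr ereal_sup; apply/seteqP; split => x.
  by case=> A HA <-; exists (\sum_(i \in A) f i); [exists A|rewrite ge0_mule_fsumr].
by case=> _ [A HA <-] <-; exists A => //; rewrite ge0_mule_fsumr.
Qed.

Lemma esum_swap (T1 T2 : choiceType) (a : T1 -> T2 -> \bar R) :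
  (forall i j, 0 <= a i j) ->
  \esum_(i in [set: T1]) \esum_(j in [set: T2]) a i j =
  \esum_(j in [set: T2]) \esum_(i in [set: T1]) a i j.
Proof.
move=> a0; rewrite !esum_esum //.
rewrite (@reindex_esum R _ _ ([set: T2] `*`` fun=> [set: T1])
   ([set: T1] `*`` fun=> [set: T2]) (fun k => (k.2, k.1))) //.
split.
- by move=> [x y] _.
- by move=> [x y] [x' y'] _ _ /= [-> ->].
- by move=> [x y] _; exists (y, x).
Qed.

Lemma esum_size_tuple (S : finType) (n : nat) (F : seq S -> \bar R) : (forall m, 0 <= F m) ->
  \esum_(m in [set: seq S]) (if size m == n then F m else 0) =
  \sum_(w : n.-tuple S) F w.
Proof.
move=> F0.
transitivity (\esum_(m in [set m : seq S | size m == n]) F m).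
  rewrite [RHS]esum_mkcond; apply: eq_esum => m _.
  by case: (boolP (size m == n)) => h; [rewrite mem_set|rewrite memNset //= (negbTE h)].
have -> : [set m : seq S | size m == n] = (fun w : n.-tuple S => val w) @` setT.
  apply/seteqP; split => m /=.
    by move=> /eqP h; exists (Tuple (introT eqP h)).
  by case=> w _ <-; rewrite size_tuple.
rewrite esum_image; last by move=> a b _ _; exact: val_inj.
by rewrite esum_fin.
Qed.

Lemma esum_mul_sum1 (M : choiceType) (X : \bar R) (f : M -> \bar R) :
  (forall t, 0 <= f t) -> \esum_(t in [set: M]) f t = 1 -> 0 <= X ->
  \esum_(t in [set: M]) (X * f t) = X.
Proof.
move=> f0 f1; case: X => [r| |] X0 //.
  rewrite esumZl ?f1 ?mule1 //; by rewrite -lee_fin.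
have [t ft] : exists t, 0 < f t.
  apply: contrapT => h; move: f1; rewrite esum1.
    by move=> /eqP; rewrite eq_sym onee_eq0.
  move=> t _; apply/eqP; rewrite eq_le f0 andbT leNgt; apply/negP => ft.
  by apply: h; exists t.
apply/eqP; rewrite eq_le leey /=; apply: esum_ge.
exists [set t]; first by split; [exact: finite_set1|].
by rewrite fsbig_set1 gt0_mulye.
Qed.

End esum_lemmas.

Section occupation_measures.
Variables (R : realType) (S Act : finType) (P : S -> Act -> S -> R).
Variables (iota : S) (T : {set S}).

(* Histories list the visited states most recent first, so [head iota h] is the current state
   ([iota] is only a default for the empty history). [y h a] stands for the probability of
   observing [h], with [T] not visited before its last state, and then playing [a]. *)
Definition is_occupation (y : seq S -> Act -> R) : Prop :=
 (forall s, \sum_a y [:: s] a = if s == iota then 1 else 0) /\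
 (forall s' h, h != [::] -> \sum_a y (s' :: h) a =
    if head iota h \notin T then \sum_a y h a * P (head iota h) a s' else 0) /\
 (forall h a, ~ enabled P (head iota h) a -> y h a = 0) /\
 (forall h a, 0 <= y h a /\ y h a <= 1).

Definition occupation_survive (t : nat) (y : seq S -> Act -> R) : R :=
  \sum_(w : (t.+1).-tuple S | head iota w \notin T) \sum_a y w a.
End occupation_measures.

Section occupation_of_strategy.
Variables (R : realType) (S Act : finType) (P : S -> Act -> S -> R).
Variables (iota : S) (T : {set S}).
Hypothesis P_ge0 : forall s a t, (0 <= P s a t)%R.
Hypothesis P_le1 : forall s a t, (P s a t <= 1)%R.
Variables (M : choiceType) (sg : strategy R S Act M).
Hypothesis sg_valid : valid_strategy P sg.
Local Open Scope ereal_scope.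

Let init_ge0 m : (0 <= st_init sg m)%R.
Proof. by case: (valid_strategy_ge0 sg_valid). Qed.
Let act_ge0 s m a : (0 <= st_act sg s m a)%R.
Proof. by case: (valid_strategy_ge0 sg_valid). Qed.
Let upd_ge0 m s a s' m' : (0 <= st_upd sg m s a s' m')%R.
Proof. by case: (valid_strategy_ge0 sg_valid). Qed.
Let act_sum1 s m : (\sum_a st_act sg s m a = 1)%R.
Proof. by case: sg_valid => _ [/(_ s m) [_ []]]. Qed.

(* [hist_reach t h m]: probability that the history at time [t] is [h], the memory is [m], and
   [T] was not visited before time [t]. *)
Fixpoint hist_reach (t : nat) : seq S -> M -> \bar R :=
  match t with
  | 0 => fun h m => if h == [:: iota] then (st_init sg m)%:E else 0
  | t'.+1 => fun h m' => match h with
     | [::] => 0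
     | s' :: h0 => if head iota h0 \notin T then
          \sum_(a : Act) \esum_(m in [set: M]) (hist_reach t' h0 m *
             (st_act sg (head iota h0) m a * P (head iota h0) a s' *
              st_upd sg m (head iota h0) a s' m')%:E)
          else 0
     end
  end.

Lemma hist_reach_ge0 t h m : 0 <= hist_reach t h m.
Proof.
elim: t h m => [|t IH] h m /=; first by case: ifP; rewrite ?lee_fin.
case: h => [|s' h] //; case: ifP => // _.
apply: sume_ge0 => a _; apply: esum_ge0 => m0 _.
by apply: mule_ge0 => //; rewrite lee_fin !mulr_ge0.
Qed.

Lemma hist_reach_mul_ge0 t h m (c : R) : (0 <= c)%R -> 0 <= hist_reach t h m * c%:E.
Proof. by move=> c0; rewrite mule_ge0 ?lee_fin ?hist_reach_ge0. Qed.

Lemma reach_hist t s m : reach P sg iota T t s m =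
  \sum_(w : t.+1.-tuple S | head iota w == s) hist_reach t w m.
Proof.
elim: t s m => [|t IH] s' m'; rewrite (big_tuple_head _ _ _ _ (fun w => hist_reach _ w m')) /=.
  by rewrite big_tuple0 /= eqseq_cons andbT; case: ifP.
rewrite -big_mkcond /= -(@exchange_big_head S _ _ _ _ iota T (fun s w =>
  \sum_a \esum_(m in [set: M])
    (hist_reach t w m * (st_act sg s m a * P s a s' * st_upd sg m s a s' m')%:E))).
apply: eq_bigr => s _; rewrite exchange_big /=; apply: eq_bigr => a _.
rewrite -esum_sum => [|m w _ _]; last by rewrite hist_reach_mul_ge0 ?mulr_ge0.
apply: eq_esum => m _; rewrite IH ge0_sume_distrl // => w _.
exact: hist_reach_ge0.
Qed.

Definition hist_prob t h := \esum_(m in [set: M]) hist_reach t h m.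
Definition hist_act_prob t h a :=
  \esum_(m in [set: M]) (hist_reach t h m * (st_act sg (head iota h) m a)%:E).

Lemma hist_act_prob_ge0 t h a : 0 <= hist_act_prob t h a.
Proof. by apply: esum_ge0 => m _; apply: mule_ge0; rewrite ?lee_fin ?hist_reach_ge0. Qed.

Lemma sum_hist_act_prob t h : \sum_a hist_act_prob t h a = hist_prob t h.
Proof.
rewrite /hist_act_prob -esum_sum; last by move=> m a _ _; exact: hist_reach_mul_ge0.
apply: eq_esum => m _; rewrite -ge0_sume_distrr; last by move=> a _; rewrite lee_fin.
by rewrite sumEFin act_sum1 mule1.
Qed.

Lemma hist_prob_cons t s' h : hist_prob t.+1 (s' :: h) =
  if head iota h \notin T then \sum_a hist_act_prob t h a * (P (head iota h) a s')%:E else 0.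
Proof.
rewrite /hist_prob /=; case: ifP => _; last by rewrite esum1.
rewrite esum_sum; last first.
  move=> m a _ _; apply: esum_ge0 => m0 _; apply: mule_ge0; first exact: hist_reach_ge0.
  by rewrite lee_fin !mulr_ge0.
apply: eq_bigr => a _; rewrite esum_swap; last first.
  move=> m m0; apply: mule_ge0; first exact: hist_reach_ge0.
  by rewrite lee_fin !mulr_ge0.
set s := head iota h.
transitivity (\esum_(m in [set: M]) (hist_reach t h m * (st_act sg s m a * P s a s')%:E)).
  apply: eq_esum => m _.
  under eq_esum do rewrite EFinM muleA.
  apply: esum_mul_sum1.
  - by move=> m0; rewrite lee_fin.
  - by case: sg_valid => _ [_ /(_ m s a s') []].
  - by apply: mule_ge0; rewrite ?lee_fin ?mulr_ge0 ?hist_reach_ge0.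
rewrite /hist_act_prob muleC -esumZl // => [|m]; last exact: hist_reach_mul_ge0.
apply: eq_esum => m _; rewrite EFinM.
by rewrite muleA [LHS]muleC.
Qed.

Lemma hist_prob_init s : hist_prob 0 [:: s] = if s == iota then 1 else 0.
Proof.
rewrite /hist_prob /= eqseq_cons andbT; case: (s == iota); last by rewrite esum1.
by case: sg_valid => [[_ ->] _].
Qed.

Lemma hist_prob_le1 t h : hist_prob t h <= 1.
Proof.
elim: t h => [|t IH] h.
  rewrite /hist_prob /=; case: (h == [:: iota]); first by case: sg_valid => [[_ ->] _].
  by rewrite esum1.
case: h => [|s' h]; first by rewrite /hist_prob /= esum1.
rewrite hist_prob_cons; case: ifP => // _.
apply: le_trans (IH h); rewrite -sum_hist_act_prob; apply: lee_sum => a _.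
rewrite -[leRHS]mule1; apply: lee_wpmul2l; first exact: hist_act_prob_ge0.
by rewrite lee_fin.
Qed.

Lemma hist_act_prob_le t h a : hist_act_prob t h a <= hist_prob t h.
Proof.
apply: le_esum => m _; rewrite -[leRHS]mule1; apply: lee_wpmul2l; first exact: hist_reach_ge0.
by rewrite lee_fin; case/andP: (prob_vec_le1 a (conj (act_ge0 _ m) (act_sum1 (head iota h) m))).
Qed.

(* A history of length [t.+1] is observed at time [t]. *)
Definition occupation (h : seq S) (a : Act) : R := fine (hist_act_prob (size h).-1 h a).

Lemma occupationE h a : (occupation h a)%:E = hist_act_prob (size h).-1 h a.
Proof.
rewrite fineK // ge0_fin_numE ?hist_act_prob_ge0 //.
by apply: le_lt_trans (le_trans (hist_act_prob_le _ _ _) (hist_prob_le1 _ _)) _; rewrite ltry.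
Qed.

Lemma is_occupation_occupation : is_occupation P iota T occupation.
Proof.
split; [|split; [|split]].
- move=> s; apply: EFin_inj; rewrite -sumEFin.
  under eq_bigr do rewrite occupationE /=.
  by rewrite sum_hist_act_prob hist_prob_init; case: ifP.
- move=> s' h hn; apply: EFin_inj; rewrite -sumEFin.
  under eq_bigr do rewrite occupationE /=.
  have hs : size h = (size h).-1.+1 by case: h hn.
  rewrite sum_hist_act_prob {1}hs hist_prob_cons; case: ifP => // _.
  rewrite -sumEFin; apply: eq_bigr => a _; by rewrite EFinM occupationE.
- move=> h a na; rewrite /occupation /hist_act_prob esum1 // => m _.
  suff -> : st_act sg (head iota h) m a = 0%R by rewrite mule0.
  have [_ [/(_ (head iota h) m) [_ [_ act_enabled]] _]] := sg_valid.
  by apply/eqP; rewrite eq_le act_ge0 andbT leNgt; apply/negP => /act_enabled.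
- move=> h a; split; first by apply: fine_ge0; exact: hist_act_prob_ge0.
  by rewrite -lee_fin occupationE; apply: le_trans (hist_act_prob_le _ _ _) (hist_prob_le1 _ _).
Qed.

Lemma survive_occupation t : survive P sg iota T t = (occupation_survive iota T t occupation)%:E.
Proof.
rewrite /survive.
have E s : \esum_(m in [set: M]) reach P sg iota T t s m =
    \sum_(w : (t.+1).-tuple S | head iota w == s) hist_prob t w.
  under eq_esum do rewrite reach_hist.
  by rewrite esum_sum // => m w _ _; exact: hist_reach_ge0.
under eq_bigr do rewrite E.
rewrite (@exchange_big_head S _ _ _ _ iota T (fun _ w => hist_prob t w)).
rewrite /occupation_survive -sumEFin.
apply: eq_bigr => w _; rewrite -sumEFin -sum_hist_act_prob.
by apply: eq_bigr => a _; rewrite occupationE size_tuple.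
Qed.

End occupation_of_strategy.

Section history_strategy.
Variables (R : realType) (S Act : finType) (P : S -> Act -> S -> R).
Hypotheses (P_ge0 : forall s a t, 0 <= P s a t) (P_enabled : forall s, exists a, enabled P s a).
Variables (iota : S) (T : {set S}) (y : seq S -> Act -> R).
Hypothesis y_occ : is_occupation P iota T y.

Let occ_init s : \sum_a y [:: s] a = if s == iota then 1 else 0.
Proof. by case: y_occ. Qed.
Let occ_cons s' h : h != [::] -> \sum_a y (s' :: h) a =
    if head iota h \notin T then \sum_a y h a * P (head iota h) a s' else 0.
Proof. by case: y_occ => _ [+ _]; apply. Qed.
Let occ_disabled h a : ~ enabled P (head iota h) a -> y h a = 0.
Proof. by case: y_occ => _ [_ [+ _]]; apply. Qed.
Let occ_ge0 h a : 0 <= y h a. Proof. by case: y_occ => _ [_ [_ /(_ h a) []]]. Qed.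

Definition occ_mass h := \sum_a y h a.

Lemma occ_mass_ge0 h : 0 <= occ_mass h.
Proof. exact: sumr_ge0. Qed.

(* The memory is the history itself; on histories of mass zero the action rule is irrelevant
   and a Dirac action keeps it valid. *)
Definition history_strategy : strategy R S Act (seq S) := Strategy
  (fun m => if m == [:: iota] then 1 else 0)
  (fun s m a => if (head iota m == s) && (0 < occ_mass m) then y m a / occ_mass m
                else dirac_act P_enabled s a)
  (fun m s a s' m' => if m' == s' :: m then 1 else 0).

Lemma valid_history_strategy : valid_strategy P history_strategy.
Proof.
have dirac_distr (m0 : seq S) : is_distr (fun m : seq S => if m == m0 then 1 else 0 : R).
  split=> [m|]; first by case: ifP.
  by rewrite (esum_single (t0 := m0)) ?eqxx // => m /negbTE ->.
split; first exact: dirac_distr.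
split=> [s m /=|m s a s']; last exact: dirac_distr.
case: andP => [[/eqP <- Qp]|_]; last exact: dirac_act_valid.
split=> [a|]; first by rewrite divr_ge0 ?occ_mass_ge0.
split=> [|a]; first by rewrite -mulr_suml divff // gt_eqF.
by move=> pa; apply: contrapT => /occ_disabled ya; move: pa; rewrite ya mul0r ltxx.
Qed.

Lemma occ_mass_act h a : occ_mass h * st_act history_strategy (head iota h) h a = y h a.
Proof.
rewrite /= eqxx /=; have [Qp|Q0] := ltP 0 (occ_mass h).
  by rewrite mulrC divfK ?gt_eqF.
have {}Q0 : occ_mass h = 0 by apply/eqP; rewrite eq_le Q0 occ_mass_ge0.
rewrite Q0 mul0r; apply/esym/eqP; rewrite eq_le occ_ge0 andbT -Q0 /occ_mass (bigD1 a) //= lerDl.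
exact: sumr_ge0.
Qed.

Lemma reach_history_strategy_cons t s' x h :
  reach P history_strategy iota T t.+1 s' (x :: h) =
  if x == s' then \sum_(s | s \notin T) \sum_a
    (reach P history_strategy iota T t s h * (st_act history_strategy s h a * P s a x)%:E)%E
  else 0%E.
Proof.
have [hi ha hu] := valid_strategy_ge0 valid_history_strategy.
rewrite /=; case: eqP => [<-|xs']; last first.
  by rewrite big1 // => s _; rewrite big1 // => a _; rewrite esum1 // => m _;
    rewrite /= eqseq_cons (introF eqP xs') mulr0 mule0.
apply: eq_bigr => s _; apply: eq_bigr => a _.
rewrite (esum_single (t0 := h)) => [|m hm|]; rewrite /= ?eqseq_cons ?eqxx ?mulr1 //.
  by rewrite andTb [h == m]eq_sym (negbTE hm) mulr0 mule0.
apply: mule_ge0; first by apply: reach_ge0 => //; exact: valid_history_strategy.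
by rewrite lee_fin; apply: mulr_ge0; [exact: ha|exact: P_ge0].
Qed.

Lemma reach_history_strategy t s m : reach P history_strategy iota T t s m =
  if (size m == t.+1) && (head iota m == s) then (occ_mass m)%:E else 0%E.
Proof.
elim: t s m => [|t IH] s' [|x h].
- by rewrite /=; case: ifP.
- rewrite /=; case: h => [|x' h] /=; last by rewrite eqseq_cons andbF; case: ifP.
  rewrite /occ_mass occ_init eqseq_cons andbT.
  case: (eqVneq x s') => [->|xs]; first by case: (s' == iota).
  by case: (eqVneq s' iota) => // e; rewrite -e (negbTE xs).
- rewrite /= big1 // => s _; rewrite big1 // => a _; rewrite esum1 // => m _.
  by rewrite /= mulr0 mule0.
rewrite reach_history_strategy_cons -[head iota (x :: h)]/x -[size (x :: h)]/(size h).+1 andbC eqSS.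
case: (eqVneq x s') => // _; rewrite andTb.
under eq_bigr do under eq_bigr do rewrite IH.
case: (eqVneq (size h) t.+1) => [sz|_]; last first.
  by rewrite big1 // => s _; rewrite big1 // => a _; rewrite mul0e.
have hN0 : h != [::] by case: h sz.
rewrite [occ_mass (x :: h)]/occ_mass occ_cons //.
transitivity (\sum_(s | s \notin T)
  (if head iota h == s then (\sum_a y h a * P s a x)%:E else 0%E))%E.
  apply: eq_bigr => s _; case: eqP => [<-|_]; last by rewrite big1 // => a _; rewrite mul0e.
  by rewrite -[RHS]sumEFin; apply: eq_bigr => a _; rewrite -EFinM mulrA occ_mass_act.
by rewrite big_notin_if_eq; case: ifP.
Qed.

Lemma survive_history_strategy t :
  survive P history_strategy iota T t = (occupation_survive iota T t y)%:E.
Proof.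
rewrite /survive.
have E s : \esum_(m in [set: seq S]) reach P history_strategy iota T t s m =
    \sum_(w : (t.+1).-tuple S | head iota w == s) (occ_mass w)%:E.
  under eq_esum do rewrite reach_history_strategy.
  transitivity (\esum_(m in [set: seq S]) (if size m == t.+1 then
      (if head iota m == s then (occ_mass m)%:E else 0%E) else 0%E)).
    by apply: eq_esum => m _; case: (size m == t.+1).
  rewrite esum_size_tuple; last by move=> m; case: ifP; rewrite ?lee_fin ?occ_mass_ge0.
  by rewrite [RHS]big_mkcond.
under eq_bigr do rewrite E.
by rewrite (@exchange_big_head S _ _ _ _ iota T (fun _ w => (occ_mass w)%:E)) sumEFin.
Qed.
End history_strategy.

Section occupation_profiles.
Variables (R : realType) (S Act : finType) (P : S -> Act -> S -> R).
Variables (k : nat) (iota : 'I_k -> S) (T : 'I_k -> {set S}).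

Definition occ_coord := ('I_k * (seq S * Act))%type.

Definition occupation_at (x : {ptws occ_coord -> R}) (i : 'I_k) : seq S -> Act -> R :=
  fun h a => x (i, (h, a)).

Definition occupation_params : set {ptws occ_coord -> R} :=
  [set x | forall i, is_occupation P (iota i) (T i) (occupation_at x i)].

Let continuous_coord c : continuous (fun x : {ptws occ_coord -> R} => x c).
Proof. exact: proj_continuous. Qed.

Lemma closed_occupation_params : closed occupation_params.
Proof.
have cmass i h : continuous (fun x => \sum_a occupation_at x i h a).
  by apply: continuous_sum => a; exact: continuous_coord.
apply: closed_forall => i; apply: closedI; last apply: closedI; last apply: closedI.
- by apply: closed_forall => s; apply: closed_eq_fun => //; exact: cst_continuous.
- apply: closed_forall => s'; apply: closed_forall => h; apply: closed_implies.
  apply: closed_eq_fun => //; case: (_ \notin _); last exact: cst_continuous.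
  apply: continuous_sum => a; apply: continuous_mul; first exact: continuous_coord.
  exact: cst_continuous.
- apply: closed_forall => h; apply: closed_forall => a; apply: closed_implies.
  by apply: closed_eq_fun; [exact: continuous_coord|exact: cst_continuous].
- apply: closed_forall => h; apply: closed_forall => a; apply: closedI.
    by apply: closed_le_fun; [exact: cst_continuous|exact: continuous_coord].
  by apply: closed_le_fun; [exact: continuous_coord|exact: cst_continuous].
Qed.

Lemma compact_occupation_params : compact occupation_params.
Proof.
apply: compact_unit_box closed_occupation_params _ => x xP [i [h a]].
by have [_ [_ [_ /(_ h a) [-> ->]]]] := xP i.
Qed.

Definition occ_survival (t : nat) (x : {ptws occ_coord -> R}) : R :=
  \prod_i occupation_survive (iota i) (T i) t (occupation_at x i).

Lemma continuous_occ_survival t : continuous (occ_survival t).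
Proof.
apply: continuous_prod => i; do 2 apply: continuous_sum => ?.
exact: continuous_coord.
Qed.

Lemma occ_survival_ge0 t x : occupation_params x -> 0 <= occ_survival t x.
Proof.
move=> xP; apply: prodr_ge0 => i _; apply: sumr_ge0 => w _; apply: sumr_ge0 => a _.
by have [_ [_ [_ /(_ w a) []]]] := xP i.
Qed.

Hypotheses (P_ge0 : forall s a t, 0 <= P s a t) (P_le1 : forall s a t, P s a t <= 1).
Hypothesis P_enabled : forall s, exists a, enabled P s a.

Definition history_profile (x : {ptws occ_coord -> R}) (i : 'I_k) :=
  history_strategy P_enabled (iota i) (occupation_at x i).

Lemma EMHit_history_profile x : occupation_params x ->
  EMHit P iota T (history_profile x) = (\sum_(t <oo) (occ_survival t x)%:E)%E.
Proof.
move=> xP; apply: eq_eseriesr => t _; rewrite -prodEFin; apply: eq_bigr => i _.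
exact: survive_history_strategy.
Qed.

Lemma values_Pi_image :
  values_Pi P iota T = [set (\sum_(t <oo) (occ_survival t x)%:E)%E | x in occupation_params].
Proof.
apply/seteqP; split=> v; last first.
  case=> x xP <-; exists (fun=> seq S : choiceType), (history_profile x).
  split=> [i|]; last by rewrite EMHit_history_profile.
  exact: valid_history_strategy.
case=> Mem [pi [pi_valid ->]].
exists (fun c => occupation P (iota c.1) (T c.1) (pi c.1) c.2.1 c.2.2).
  by move=> i; exact: (is_occupation_occupation (iota i) (T i) P_ge0 P_le1 (pi_valid i)).
apply: eq_eseriesr => t _; rewrite -prodEFin; apply: eq_bigr => i _.
by rewrite (survive_occupation (iota i) (T i) P_ge0 P_le1 (pi_valid i)).
Qed.

Lemma exists_Pi_optimal :
  exists (Mem : 'I_k -> choiceType) (pi : forall i, strategy R S Act (Mem i)),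
    (forall i, valid_strategy P (pi i)) /\ EMHit P iota T pi = ereal_inf (values_Pi P iota T).
Proof.
have Kne : occupation_params !=set0.
  have : values_Pi P iota T (EMHit P iota T (fun=> default_strategy P_enabled)).
    exists (fun=> unit : choiceType), (fun=> default_strategy P_enabled).
    by split=> // i; exact: valid_default_strategy.
  by rewrite values_Pi_image => -[x xP _]; exists x.
have [|x xP xmin] := compact_nneseries_inf_attained compact_occupation_params
  closed_occupation_params Kne continuous_occ_survival.
  by move=> t y; exact: occ_survival_ge0.
exists (fun=> seq S : choiceType), (history_profile x); split.
  by move=> i; exact: valid_history_strategy.
by rewrite values_Pi_image EMHit_history_profile.
Qed.

End occupation_profiles.

(** * Profiles with bounded memory *)

Section finite_memory_profiles.
Variables (R : realType) (S Act : finType) (P : S -> Act -> S -> R).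
Hypothesis P_ge0 : forall s a t, 0 <= P s a t.
Variables (k : nat) (iota : 'I_k -> S) (T : 'I_k -> {set S}).

Lemma EMHit_finE (Mem : 'I_k -> finType) (pi : forall i, strategy R S Act (Mem i)) :
  (forall i, valid_strategy P (pi i)) ->
  EMHit P iota T pi = (\sum_(t <oo) (\prod_i surviveR P (iota i) (T i) (pi i) t)%:E)%E.
Proof.
move=> pi_valid; apply: eq_eseriesr => t _; rewrite -prodEFin.
by apply: eq_bigr => i _; rewrite surviveEFin.
Qed.

Variable M : finType.

Definition fin_coord := ('I_k * (M + S * M * Act + M * S * Act * S * M))%type.

Definition fin_strategy_at (x : {ptws fin_coord -> R}) (i : 'I_k) : strategy R S Act M :=
  Strategy (fun m => x (i, inl (inl m))) (fun s m a => x (i, inl (inr (s, m, a))))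
    (fun m s a s' m' => x (i, inr (m, s, a, s', m'))).

Definition fin_params_of (pi : 'I_k -> strategy R S Act M) : {ptws fin_coord -> R} :=
  fun c => match c with
  | (i, inl (inl m)) => st_init (pi i) m
  | (i, inl (inr (s, m, a))) => st_act (pi i) s m a
  | (i, inr (m, s, a, s', m')) => st_upd (pi i) m s a s' m'
  end.

Lemma fin_strategy_at_params_of pi i : fin_strategy_at (fin_params_of pi) i = pi i.
Proof. by rewrite /fin_strategy_at /=; case: (pi i). Qed.

Definition valid_fin_params : set {ptws fin_coord -> R} :=
  [set x | forall i, valid_strategy P (fin_strategy_at x i)].

Lemma closed_valid_fin_params : closed valid_fin_params.
Proof.
have cx c : continuous (fun x : {ptws fin_coord -> R} => x c) by exact: proj_continuous.
have -> : valid_fin_params = [set x | forall i, prob_vec (st_init (fin_strategy_at x i)) /\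
      (forall s m, prob_vec (st_act (fin_strategy_at x i) s m) /\
        (forall a, ~ enabled P s a -> st_act (fin_strategy_at x i) s m a = 0)) /\
      (forall m s a s', prob_vec (st_upd (fin_strategy_at x i) m s a s'))].
  by apply/seteqP; split=> x xP i; apply/valid_strategy_finP; exact: xP.
apply: closed_forall => i.
have cpv (J : finType) (c : J -> fin_coord) :
    closed [set x : {ptws fin_coord -> R} | prob_vec (fun j => x (c j))].
  by apply: closed_prob_vec => j; exact: cx.
apply: closedI; first exact: cpv.
apply: closedI; last by do 4 apply: closed_forall => ?; exact: cpv.
do 2 apply: closed_forall => ?; apply: closedI; first exact: cpv.
apply: closed_forall => a; apply: closed_implies.
exact: (continuous_closedP _).1 (cx _) _ (@closed_eq _ 0).
Qed.

Lemma compact_valid_fin_params : compact valid_fin_params.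
Proof.
apply: compact_unit_box closed_valid_fin_params _ => x /(_ _) xP [i c].
have /valid_strategy_finP [hi [ha hu]] := xP i.
case: c => [[m|[[s m] a]]|[[[[m s] a] s'] m']].
- exact: (prob_vec_le1 m hi).
- exact: (prob_vec_le1 a (ha s m).1).
- exact: (prob_vec_le1 m' (hu m s a s')).
Qed.

Definition fin_survival (t : nat) (x : {ptws fin_coord -> R}) : R :=
  \prod_i surviveR P (iota i) (T i) (fin_strategy_at x i) t.

Lemma continuous_reachR_at i t s m :
  continuous (fun x => reachR P (iota i) (T i) (fin_strategy_at x i) t s m).
Proof.
have cx c : continuous (fun x : {ptws fin_coord -> R} => x c) by exact: proj_continuous.
elim: t s m => [|t IH] s m /=.
  by case: (s == iota i); [exact: cx|exact: cst_continuous].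
do 3 apply: continuous_sum => ?.
apply: continuous_mul; first exact: IH.
apply: continuous_mul; last exact: cx.
by apply: continuous_mul; [exact: cx|exact: cst_continuous].
Qed.

Lemma continuous_fin_survival t : continuous (fin_survival t).
Proof.
apply: continuous_prod => i; do 2 apply: continuous_sum => ?.
exact: continuous_reachR_at.
Qed.

Lemma fin_survival_ge0 t x : valid_fin_params x -> 0 <= fin_survival t x.
Proof.
move=> xP; apply: prodr_ge0 => i _; do 2 apply: sumr_ge0 => ? _.
exact: reachR_ge0.
Qed.

Lemma EMHit_fin_strategy_at x : valid_fin_params x ->
  EMHit P iota T (fin_strategy_at x) = (\sum_(t <oo) (fin_survival t x)%:E)%E.
Proof. exact: EMHit_finE. Qed.

End finite_memory_profiles.

Section bounded_memory.
Variables (R : realType) (S Act : finType) (P : S -> Act -> S -> R).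
Hypotheses (P_ge0 : forall s a t, 0 <= P s a t) (P_enabled : forall s, exists a, enabled P s a).
Variables (k : nat) (iota : 'I_k -> S) (T : 'I_k -> {set S}) (n : nat).

Lemma values_Pin_image : values_Pin P iota T n =
  [set (\sum_(t <oo) (fin_survival P iota T t x)%:E)%E | x in @valid_fin_params _ _ _ P k 'I_n].
Proof.
apply/seteqP; split=> v; last first.
  case=> x xP <-; exists (fun _ => 'I_n), (fin_strategy_at x).
  by split=> [i|]; [rewrite card_ord|split => //; rewrite EMHit_fin_strategy_at].
case=> Mem [pi [Mem_le [pi_valid ->]]].
pose f i (m : Mem i) : 'I_n := widen_ord (Mem_le i) (enum_rank m).
have f_inj i : injective (f i) by move=> m m' /(congr1 val) /= /val_inj /enum_rank_inj.
exists (fin_params_of (fun i => push_strategy P_enabled (f i) (pi i))).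
  by move=> i; rewrite /= fin_strategy_at_params_of; exact: valid_push_strategy.
rewrite EMHit_finE //; apply: eq_eseriesr => t _; congr EFin.
by apply: eq_bigr => i _; rewrite fin_strategy_at_params_of surviveR_push.
Qed.

Lemma exists_Pin_optimal : (0 < n)%N ->
  exists (Mem : 'I_k -> finType) (pi : forall i, strategy R S Act (Mem i)),
    (forall i, #|Mem i| <= n)%N /\ (forall i, valid_strategy P (pi i)) /\
    EMHit P iota T pi = ereal_inf (values_Pin P iota T n).
Proof.
move=> n_gt0.
have Kne : @valid_fin_params _ _ _ P k 'I_n !=set0.
  have : values_Pin P iota T n (EMHit P iota T (fun=> default_strategy P_enabled)).
    exists (fun=> unit : finType), (fun=> default_strategy P_enabled).
    by split=> [i|]; [rewrite card_unit|split=> // i; exact: valid_default_strategy].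
  by rewrite values_Pin_image => -[x xP _]; exists x.
have [|x xP xmin] := compact_nneseries_inf_attained (@compact_valid_fin_params _ _ _ P k 'I_n)
  (@closed_valid_fin_params _ _ _ P k 'I_n) Kne (@continuous_fin_survival _ _ _ P k iota T 'I_n).
  by move=> t y; exact: fin_survival_ge0.
exists (fun _ => 'I_n), (fin_strategy_at x); split=> [i|]; first by rewrite card_ord.
by split=> //; rewrite values_Pin_image EMHit_fin_strategy_at.
Qed.

End bounded_memory.

Unset Implicit Arguments.

Theorem mainTheorem3 (R : realType) (S Act : finType) (P : S -> Act -> S -> R)
    (k : nat) (iota : 'I_k -> S) (T : 'I_k -> {set S}) :
  is_MDP P -> (0 < k)%N ->
  (forall i, iota i \notin T i) -> (forall i, T i != finset.set0) ->
  (exists (Mem : 'I_k -> choiceType) (pi : forall i, strategy R S Act (Mem i)),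
     (forall i, valid_strategy P (pi i)) /\
     EMHit P iota T pi = ereal_inf (values_Pi P iota T)) /\
  (forall n : nat, (0 < n)%N ->
     exists (Mem : 'I_k -> finType) (pi : forall i, strategy R S Act (Mem i)),
       (forall i, #|Mem i| <= n)%N /\
       (forall i, valid_strategy P (pi i)) /\
       EMHit P iota T pi = ereal_inf (values_Pin P iota T n)).
Proof.
case=> P_bounds P_enabled _ _ _.
have P_ge0 s a t : 0 <= P s a t by case/andP: (P_bounds s a t).
have P_le1 s a t : P s a t <= 1 by case/andP: (P_bounds s a t).
split; first exact: exists_Pi_optimal.
by move=> n n_gt0; exact: exists_Pin_optimal.
Qed.
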